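(* Let $0<\delta<\frac12$. Let $g\in\mathrm{Diff}_0^3(I)$ and $f\in\mathrm{Diff}_+^{1,\delta}(I)$ be such that $p_\delta(g\circ f)\le C$ for some $C>0$, and let $m$ be the minimum of $f'$ on $I$. Then $\psi=\log(g')$ satisfies $|\psi(t)-\psi(s)|\le \frac{C+p_\delta(f)}{m^\delta}|t-s|^\delta$ for all $s,t\in I$.
   Context: $I=[0,1]$. $\mathrm{Diff}_+^1(I)$ is the set of $C^1$ diffeomorphisms of $I$ fixing $0$ and $1$; $\mathrm{Diff}_+^{1,\delta}(I)$ is the set of $f\in\mathrm{Diff}_+^1(I)$ with $f'$ Hölder of exponent $\delta$. $\mathrm{Diff}_0^3(I)$ is the set of $C^3$ diffeomorphisms $f$ of $I$ fixing $0$ and $1$ with $f'(0)=f'(1)=1$. For $f\in\mathrm{Diff}_+^{1,\delta}(I)$, $p_\delta(f)=|\log(f'(0))|+\sup_{t_1\ne t_2\in I}\frac{|\log(f'(t_2))-\log(f'(t_1))|}{|t_2-t_1|^\delta}$ (a finite number). *)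

From Stdlib Require Import Reals.
From Coquelicot Require Import Coquelicot.
Open Scope R_scope.

Definition inI (x : R) : Prop := 0 <= x <= 1.

Definition hpow (x d : R) : R := if Rle_dec x 0 then 0 else Rpower x d.

Definition cont_on_I (h : R -> R) : Prop :=
  forall x, inI x -> forall eps, 0 < eps -> exists del, 0 < del /\
    forall y, inI y -> Rabs (y - x) < del -> Rabs (h y - h x) < eps.

Definition deriv_on_I (f df : R -> R) : Prop :=
  forall x, inI x -> forall eps, 0 < eps -> exists del, 0 < del /\
    forall y, inI y -> y <> x -> Rabs (y - x) < del ->
      Rabs ((f y - f x) / (y - x) - df x) < eps.

(* f is in Diff^1_+(I) with derivative df: C^1 on I, fixes 0 and 1,
   and f' > 0 (so f is a C^1 diffeomorphism of I onto itself). *)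
Definition Diff1 (f df : R -> R) : Prop :=
  f 0 = 0 /\ f 1 = 1 /\ deriv_on_I f df /\ cont_on_I df /\
  (forall x, inI x -> 0 < df x).

Definition holder_on_I (h : R -> R) (d : R) : Prop :=
  exists K, forall s t, inI s -> inI t ->
    Rabs (h t - h s) <= K * hpow (Rabs (t - s)) d.

Definition Diff1delta (f df : R -> R) (d : R) : Prop :=
  Diff1 f df /\ holder_on_I df d.

(* g is in Diff^3_0(I): C^3 diffeomorphism of I fixing 0,1 with g'(0)=g'(1)=1;
   dg, d2g, d3g are its first three derivatives on I. *)
Definition Diff03 (g dg d2g d3g : R -> R) : Prop :=
  Diff1 g dg /\ deriv_on_I dg d2g /\ deriv_on_I d2g d3g /\ cont_on_I d3g /\
  dg 0 = 1 /\ dg 1 = 1.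

(* p_delta(f) = |log f'(0)| + sup_{t1 <> t2 in I} |log f'(t2) - log f'(t1)| / |t2-t1|^delta,
   expressed in terms of the derivative df of f. *)
Definition p_delta (df : R -> R) (d : R) : R :=
  Rabs (ln (df 0)) +
  real (Lub_Rbar (fun r => exists t1 t2, inI t1 /\ inI t2 /\ t1 <> t2 /\
          r = Rabs (ln (df t2) - ln (df t1)) / hpow (Rabs (t2 - t1)) d)).

(* With psi = ln g', the chain rule (g o f)' = (g' o f) f' gives
     psi (f x) - psi (f y) = [ln (g o f)' x - ln (g o f)' y] - [ln f' x - ln f' y],
   whose absolute value is at most (p_delta (g o f) + p_delta f) |x - y|^d.
   Since |f x - f y| >= m |x - y| and f maps I onto I, this is the claim.
   The supremum in p_delta only bounds the ratios once they are known to be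
   bounded; for g o f this holds because ln g' is Lipschitz (g is C^2) and
   ln f' is d-Hoelder (f' is d-Hoelder and >= m > 0). *)

From Stdlib Require Import Reals Lra.
From Coquelicot Require Import Coquelicot.
Open Scope R_scope.

(* Extending functions on I by [F (clamp x)] gives functions on R, to which the
   mean value, intermediate value and extreme value theorems of the library apply. *)
Definition clamp (x : R) : R := Rmax 0 (Rmin 1 x).

Lemma clamp_inI x : inI (clamp x).
Proof. unfold clamp, inI, Rmax, Rmin; repeat destruct Rle_dec; lra. Qed.

Lemma clamp_id x : inI x -> clamp x = x.
Proof. unfold clamp, inI, Rmax, Rmin; intros; repeat destruct Rle_dec; lra. Qed.

Lemma clamp_dist x y : Rabs (clamp y - clamp x) <= Rabs (y - x).
Proof.
  unfold clamp, Rmax, Rmin; repeat destruct Rle_dec; unfold Rabs;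
  repeat destruct Rcase_abs; lra.
Qed.

Lemma inI_exists_near x del : inI x -> 0 < del ->
  exists y, inI y /\ y <> x /\ Rabs (y - x) < del.
Proof.
  intros Hx Hdel. set (h := Rmin del (1/2) / 2).
  assert (Hh : 0 < h < del /\ h <= 1/4).
  { unfold h; pose proof (Rmin_l del (1/2)); pose proof (Rmin_r del (1/2)).
    pose proof (Rmin_pos del (1/2) Hdel ltac:(lra)); lra. }
  destruct (Rle_dec x (1/2)).
  - exists (x + h). unfold inI in *. repeat split; try lra.
    rewrite Rabs_right; lra.
  - exists (x - h). unfold inI in *. repeat split; try lra.
    rewrite Rabs_left; lra.
Qed.

Lemma deriv_on_I_local_lipschitz F DF x : deriv_on_I F DF -> inI x ->
  exists del, 0 < del /\ forall y, inI y -> Rabs (y - x) < del ->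
    Rabs (F y - F x) <= (Rabs (DF x) + 1) * Rabs (y - x).
Proof.
  intros HF Hx. destruct (HF x Hx 1 Rlt_0_1) as [del [Hdel Hq]].
  exists del. split; [exact Hdel|]. intros y Hy Hyx.
  destruct (Req_dec y x) as [->|Hne].
  { rewrite !Rminus_diag, Rabs_R0. lra. }
  specialize (Hq y Hy Hne Hyx).
  replace (F y - F x) with ((F y - F x) / (y - x) * (y - x)) by (field; lra).
  rewrite Rabs_mult. apply Rmult_le_compat_r; [apply Rabs_pos|].
  replace ((F y - F x) / (y - x)) with (((F y - F x) / (y - x) - DF x) + DF x) by ring.
  pose proof (Rabs_triang ((F y - F x) / (y - x) - DF x) (DF x)). lra.
Qed.

Lemma deriv_on_I_cont F DF : deriv_on_I F DF -> cont_on_I F.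
Proof.
  intros HF x Hx eps Heps.
  destruct (deriv_on_I_local_lipschitz F DF x HF Hx) as [del [Hdel Hlip]].
  set (K := Rabs (DF x) + 1).
  assert (HK : 0 < K) by (unfold K; pose proof (Rabs_pos (DF x)); lra).
  exists (Rmin del (eps / K)). split.
  { apply Rmin_pos; [lra | apply Rdiv_lt_0_compat; lra]. }
  intros y Hy Hyx. apply Rmin_Rgt in Hyx as [Hy1 Hy2].
  eapply Rle_lt_trans; [apply Hlip; auto|].
  apply Rmult_lt_reg_r with (/ K); [apply Rinv_0_lt_compat; lra|].
  fold K. replace (K * Rabs (y - x) * / K) with (Rabs (y - x)) by (field; lra).
  exact Hy2.
Qed.

Lemma cont_on_I_clamp h : cont_on_I h -> continuity (fun y => h (clamp y)).
Proof.
  intros H x eps Heps.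
  destruct (H (clamp x) (clamp_inI x) eps Heps) as [del [Hdel Hh]].
  exists del; split; [exact Hdel|].
  intros y [_ Hy]. simpl in *. unfold R_dist in *.
  apply Hh; [apply clamp_inI|]. eapply Rle_lt_trans; [apply clamp_dist | exact Hy].
Qed.

Lemma deriv_on_I_clamp F DF x : deriv_on_I F DF -> 0 < x < 1 ->
  is_derive (fun y => F (clamp y)) x (DF x).
Proof.
  intros HF Hx. apply is_derive_Reals. intros eps Heps.
  assert (HxI : inI x) by (unfold inI; lra).
  destruct (HF x HxI eps Heps) as [del [Hdel Hq]].
  assert (Hpos : 0 < Rmin del (Rmin x (1 - x))) by (repeat apply Rmin_pos; lra).
  exists (mkposreal _ Hpos). intros h Hh0 Hh. simpl in Hh.
  apply Rmin_Rgt in Hh as [Hh1 Hh]. apply Rmin_Rgt in Hh as [Hh2 Hh3].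
  assert (HI : inI (x + h)).
  { revert Hh2 Hh3; unfold inI, Rabs; destruct Rcase_abs; lra. }
  rewrite (clamp_id _ HI), (clamp_id _ HxI).
  replace h with ((x + h) - x) at 2 by ring.
  apply Hq; auto; [lra | now replace (x + h - x) with h by ring].
Qed.

Lemma MVT_on_I F DF a b : deriv_on_I F DF -> inI a -> inI b ->
  exists c, inI c /\ F b - F a = DF c * (b - a).
Proof.
  intros HF Ha Hb.
  destruct (MVT_gen (fun y => F (clamp y)) a b DF) as [c [Hc Hmvt]].
  - intros x Hx. apply deriv_on_I_clamp; auto.
    unfold inI, Rmin, Rmax in *. destruct Rle_dec; lra.
  - intros x _. apply cont_on_I_clamp, (deriv_on_I_cont F DF HF).
  - rewrite (clamp_id _ Ha), (clamp_id _ Hb) in Hmvt. exists c. split; auto.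
    unfold inI, Rmin, Rmax in *; destruct Rle_dec; lra.
Qed.

Lemma cont_on_I_bounded h : cont_on_I h -> exists M, forall x, inI x -> Rabs (h x) <= M.
Proof.
  intros H.
  destruct (continuity_ab_maj (fun y => h (clamp y)) 0 1) as [a [Ha _]];
    [lra | intros; apply cont_on_I_clamp; auto |].
  destruct (continuity_ab_min (fun y => h (clamp y)) 0 1) as [b [Hb _]];
    [lra | intros; apply cont_on_I_clamp; auto |].
  exists (Rabs (h (clamp a)) + Rabs (h (clamp b))). intros x Hx.
  specialize (Ha x Hx). specialize (Hb x Hx). rewrite (clamp_id _ Hx) in *.
  unfold Rabs; repeat destruct Rcase_abs; lra.
Qed.

Lemma cont_on_I_pos_lower_bound h : cont_on_I h -> (forall x, inI x -> 0 < h x) ->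
  exists c, 0 < c /\ forall x, inI x -> c <= h x.
Proof.
  intros H Hpos.
  destruct (continuity_ab_min (fun y => h (clamp y)) 0 1) as [b [Hb _]];
    [lra | intros; apply cont_on_I_clamp; auto |].
  exists (h (clamp b)). split; [apply Hpos, clamp_inI|].
  intros x Hx. specialize (Hb x Hx). now rewrite (clamp_id _ Hx) in Hb.
Qed.

Lemma deriv_on_I_unique F D1 D2 : deriv_on_I F D1 -> deriv_on_I F D2 ->
  forall x, inI x -> D1 x = D2 x.
Proof.
  intros H1 H2 x Hx.
  assert (Hle : Rabs (D1 x - D2 x) <= 0).
  { apply Rle_plus_epsilon. intros eps Heps.
    destruct (H1 x Hx (eps / 2)) as [d1 [Hd1 K1]]; [lra|].
    destruct (H2 x Hx (eps / 2)) as [d2 [Hd2 K2]]; [lra|].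
    destruct (inI_exists_near x (Rmin d1 d2) Hx (Rmin_pos _ _ Hd1 Hd2))
      as [y [Hy [Hyx Hnear]]].
    apply Rmin_Rgt in Hnear as [Hn1 Hn2].
    specialize (K1 y Hy Hyx Hn1). specialize (K2 y Hy Hyx Hn2).
    set (Q := (F y - F x) / (y - x)) in *.
    replace (D1 x - D2 x) with (- (Q - D1 x) + (Q - D2 x)) by ring.
    pose proof (Rabs_triang (- (Q - D1 x)) (Q - D2 x)). rewrite Rabs_Ropp in H. lra. }
  pose proof (Rabs_pos (D1 x - D2 x)).
  destruct (Req_dec (D1 x) (D2 x)) as [|Hne]; auto.
  pose proof (Rabs_pos_lt (D1 x - D2 x) ltac:(lra)). lra.
Qed.

Lemma deriv_on_I_comp F DF G DG : deriv_on_I F DF -> deriv_on_I G DG ->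
  (forall x, inI x -> inI (F x)) ->
  (forall x y, inI x -> inI y -> x <> y -> F x <> F y) ->
  deriv_on_I (fun x => G (F x)) (fun x => DG (F x) * DF x).
Proof.
  intros HF HG HFI Hinj x Hx eps Heps.
  set (A := DG (F x)). set (B := DF x).
  pose proof (Rabs_pos A). pose proof (Rabs_pos B).
  set (e := eps / (Rabs A + Rabs B + 1)).
  assert (He : 0 < e) by (unfold e; apply Rdiv_lt_0_compat; lra).
  destruct (deriv_on_I_local_lipschitz F DF x HF Hx) as [d1 [Hd1 Hlip]].
  destruct (HF x Hx e He) as [d2 [Hd2 KF]].
  destruct (HG (F x) (HFI x Hx) e He) as [eta [Heta KG]].
  exists (Rmin (Rmin d1 d2) (eta / (Rabs B + 1))). split.
  { repeat apply Rmin_pos; try apply Rdiv_lt_0_compat; lra. }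
  intros y Hy Hyx Hnear.
  apply Rmin_Rgt in Hnear as [Hnear Hn3]. apply Rmin_Rgt in Hnear as [Hn1 Hn2].
  assert (Hpos : 0 < Rabs (y - x)) by (apply Rabs_pos_lt; lra).
  specialize (Hlip y Hy Hn1). specialize (KF y Hy Hyx Hn2). fold B in Hlip, KF.
  assert (HFeta : Rabs (F y - F x) < eta).
  { eapply Rle_lt_trans; [exact Hlip|].
    apply Rmult_lt_reg_r with (/ (Rabs B + 1)); [apply Rinv_0_lt_compat; lra|].
    replace ((Rabs B + 1) * Rabs (y - x) * / (Rabs B + 1)) with (Rabs (y - x))
      by (field; lra).
    exact Hn3. }
  assert (HFne : F y <> F x) by (apply Hinj; auto).
  specialize (KG (F y) (HFI y Hy) HFne HFeta). fold A in KG.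
  set (QF := (F y - F x) / (y - x)) in *.
  set (QG := (G (F y) - G (F x)) / (F y - F x)) in *.
  assert (HQF : Rabs QF <= Rabs B + 1).
  { unfold QF. rewrite Rabs_div by lra.
    apply Rmult_le_reg_r with (Rabs (y - x)); [lra|].
    unfold Rdiv. rewrite Rmult_assoc, Rinv_l by lra. lra. }
  replace ((G (F y) - G (F x)) / (y - x) - A * B)
    with ((QG - A) * QF + A * (QF - B)) by (unfold QG, QF, A, B; field; lra).
  eapply Rle_lt_trans; [apply Rabs_triang|]. rewrite !Rabs_mult.
  assert (Heps_e : eps = e * (Rabs A + Rabs B + 1)) by (unfold e; field; lra).
  pose proof (Rabs_pos (QG - A)). pose proof (Rabs_pos (QF - B)).
  nra.
Qed.

Lemma ln_diff_le c x y B : 0 < c -> c <= x -> c <= y -> Rabs (y - x) <= B ->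
  Rabs (ln y - ln x) <= B / c.
Proof.
  (* ln u - ln v <= u / v - 1 <= (u - v) / c, from exp z >= 1 + z at z = ln (u / v) *)
  assert (Hdir : forall u v, 0 < c -> c <= u -> c <= v -> v <= u ->
            ln u - ln v <= (u - v) / c).
  { intros u v Hc Hu Hv Huv. rewrite <- ln_div by lra.
    pose proof (exp_ineq1_le (ln (u / v))) as Hexp.
    rewrite exp_ln in Hexp by (apply Rdiv_lt_0_compat; lra).
    replace (u / v) with (1 + (u - v) / v) in Hexp at 2 by (field; lra).
    enough ((u - v) / v <= (u - v) / c) by lra.
    unfold Rdiv; apply Rmult_le_compat_l; [lra | apply Rinv_le_contravar; lra]. }
  intros Hc Hx Hy HB.
  assert (Habs : Rabs (ln y - ln x) <= Rabs (y - x) / c).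
  { destruct (Rle_dec x y).
    - pose proof (ln_le x y ltac:(lra) r).
      rewrite !Rabs_right by lra. apply Hdir; lra.
    - pose proof (ln_le y x ltac:(lra) ltac:(lra)).
      rewrite !Rabs_left1 by lra.
      replace (- (ln y - ln x)) with (ln x - ln y) by ring.
      replace (- (y - x)) with (x - y) by ring. apply Hdir; lra. }
  eapply Rle_trans; [exact Habs|].
  apply Rmult_le_compat_r; [left; apply Rinv_0_lt_compat|]; lra.
Qed.

Lemma hpow_Rpower x d : 0 < x -> hpow x d = Rpower x d.
Proof. intros. unfold hpow. destruct Rle_dec; lra. Qed.

Lemma hpow_nonneg x d : 0 <= hpow x d.
Proof. unfold hpow. destruct Rle_dec; [lra | left; apply exp_pos]. Qed.

Lemma hpow_pos x d : 0 < x -> 0 < hpow x d.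
Proof. intros. rewrite hpow_Rpower by auto. apply exp_pos. Qed.

Lemma hpow_ge x d : 0 <= x <= 1 -> 0 <= d <= 1 -> x <= hpow x d.
Proof.
  intros Hx Hd. destruct (Req_dec x 0) as [->|Hx0]; [apply hpow_nonneg|].
  rewrite hpow_Rpower by lra. unfold Rpower.
  assert (ln x <= 0) by (rewrite <- ln_1; apply ln_le; lra).
  rewrite <- (exp_ln x) at 1 by lra.
  destruct (Rle_lt_or_eq_dec (ln x) (d * ln x)) as [Hlt|Heq]; [nra| |].
  - left; apply exp_increasing; exact Hlt.
  - right; congruence.
Qed.

Lemma hpow_scale_le m x y d : 0 < m -> 0 <= d -> 0 <= x -> m * x <= y ->
  Rpower m d * hpow x d <= hpow y d.
Proof.
  intros Hm Hd Hx Hxy. destruct (Req_dec x 0) as [->|Hx0].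
  { unfold hpow at 1. destruct Rle_dec; [|lra]. rewrite Rmult_0_r. apply hpow_nonneg. }
  rewrite !hpow_Rpower, Rpower_mult_distr by nra.
  apply Rle_Rpower_l; nra.
Qed.

Definition lipschitz_with (h : R -> R) (L : R) : Prop :=
  forall a b, inI a -> inI b -> Rabs (h b - h a) <= L * Rabs (b - a).

Definition holder_with (h : R -> R) (K d : R) : Prop :=
  forall a b, inI a -> inI b -> Rabs (h b - h a) <= K * hpow (Rabs (b - a)) d.

Lemma lipschitz_with_nonneg h L : lipschitz_with h L -> 0 <= L.
Proof.
  intros H. pose proof (H 0 1 ltac:(red; lra) ltac:(red; lra)) as H01.
  rewrite Rminus_0_r, Rabs_R1, Rmult_1_r in H01.
  pose proof (Rabs_pos (h 1 - h 0)). lra.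
Qed.

Lemma lipschitz_with_comp h L f M : lipschitz_with h L -> lipschitz_with f M ->
  (forall x, inI x -> inI (f x)) -> lipschitz_with (fun x => h (f x)) (L * M).
Proof.
  intros Hh Hf HfI a b Ha Hb.
  pose proof (lipschitz_with_nonneg h L Hh).
  eapply Rle_trans; [apply Hh; auto|].
  rewrite Rmult_assoc. apply Rmult_le_compat_l; auto.
Qed.

Lemma lipschitz_with_holder h L d : 0 <= d <= 1 -> lipschitz_with h L -> holder_with h L d.
Proof.
  intros Hd Hh a b Ha Hb.
  pose proof (lipschitz_with_nonneg h L Hh).
  eapply Rle_trans; [apply Hh; auto|].
  apply Rmult_le_compat_l; auto. apply hpow_ge; auto.
  split; [apply Rabs_pos|]. unfold inI in *; unfold Rabs; destruct Rcase_abs; lra.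
Qed.

Lemma holder_with_ext h k K d : (forall x, inI x -> h x = k x) ->
  holder_with k K d -> holder_with h K d.
Proof. intros E Hk a b Ha Hb. rewrite !E by auto. auto. Qed.

Lemma holder_with_le h K K' d : K <= K' -> holder_with h K d -> holder_with h K' d.
Proof.
  intros HK Hh a b Ha Hb. eapply Rle_trans; [apply Hh; auto|].
  apply Rmult_le_compat_r; [apply hpow_nonneg | exact HK].
Qed.

Lemma holder_with_add h k K K' d : holder_with h K d -> holder_with k K' d ->
  holder_with (fun x => h x + k x) (K + K') d.
Proof.
  intros Hh Hk a b Ha Hb.
  replace (h b + k b - (h a + k a)) with ((h b - h a) + (k b - k a)) by ring.
  eapply Rle_trans; [apply Rabs_triang|].
  specialize (Hh a b Ha Hb). specialize (Hk a b Ha Hb). lra.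
Qed.

Lemma holder_with_sub h k K K' d : holder_with h K d -> holder_with k K' d ->
  holder_with (fun x => h x - k x) (K + K') d.
Proof.
  intros Hh Hk a b Ha Hb.
  replace (h b - k b - (h a - k a)) with ((h b - h a) + - (k b - k a)) by ring.
  eapply Rle_trans; [apply Rabs_triang|]. rewrite Rabs_Ropp.
  specialize (Hh a b Ha Hb). specialize (Hk a b Ha Hb). lra.
Qed.

Definition log_holder_ratios (h : R -> R) (d r : R) : Prop :=
  exists t1 t2, inI t1 /\ inI t2 /\ t1 <> t2 /\
    r = Rabs (ln (h t2) - ln (h t1)) / hpow (Rabs (t2 - t1)) d.

Lemma p_delta_ratios h d :
  p_delta h d = Rabs (ln (h 0)) + real (Lub_Rbar (log_holder_ratios h d)).
Proof. reflexivity. Qed.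

(* When E is unbounded, [real (Lub_Rbar E)] is the junk value 0, so a bound on
   the ratios is needed before the supremum can be used. *)
Lemma le_real_Lub_Rbar (E : R -> Prop) B : (forall r, E r -> r <= B) ->
  forall r, E r -> r <= real (Lub_Rbar E).
Proof.
  intros HB r Hr. destruct (Lub_Rbar_correct E) as [Hub Hleast].
  assert (Hle : Rbar_le (Lub_Rbar E) B) by (apply Hleast; intros s Hs; apply HB, Hs).
  specialize (Hub r Hr).
  destruct (Lub_Rbar E); simpl in *; tauto.
Qed.

Lemma p_delta_nonneg h d : 0 <= p_delta h d.
Proof.
  rewrite p_delta_ratios.
  set (r := Rabs (ln (h 1) - ln (h 0)) / hpow (Rabs (1 - 0)) d).
  assert (Hr : log_holder_ratios h d r).
  { exists 0, 1. unfold inI. repeat split; lra. }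
  assert (Hr0 : 0 <= r).
  { apply Rdiv_le_0_compat; [apply Rabs_pos | apply hpow_pos].
    rewrite Rminus_0_r, Rabs_R1; lra. }
  destruct (Lub_Rbar_correct (log_holder_ratios h d)) as [Hub _].
  specialize (Hub r Hr). pose proof (Rabs_pos (ln (h 0))).
  destruct (Lub_Rbar (log_holder_ratios h d)); simpl in *; lra.
Qed.

Lemma holder_with_p_delta h K d : holder_with (fun x => ln (h x)) K d ->
  holder_with (fun x => ln (h x)) (p_delta h d) d.
Proof.
  intros Hh a b Ha Hb.
  destruct (Req_dec a b) as [<-|Hab].
  { rewrite !Rminus_diag, Rabs_R0. apply Rmult_le_pos; [apply p_delta_nonneg | apply hpow_nonneg]. }
  assert (Hpos : 0 < hpow (Rabs (b - a)) d) by (apply hpow_pos, Rabs_pos_lt; lra).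
  set (r := Rabs (ln (h b) - ln (h a)) / hpow (Rabs (b - a)) d).
  assert (Hbound : forall s, log_holder_ratios h d s -> s <= K).
  { intros s [t1 [t2 [H1 [H2 [H12 ->]]]]].
    assert (0 < hpow (Rabs (t2 - t1)) d) by (apply hpow_pos, Rabs_pos_lt; lra).
    apply Rmult_le_reg_r with (hpow (Rabs (t2 - t1)) d); auto.
    unfold Rdiv. rewrite Rmult_assoc, Rinv_l by lra. rewrite Rmult_1_r. apply Hh; auto. }
  assert (Hr : r <= p_delta h d).
  { rewrite p_delta_ratios. pose proof (Rabs_pos (ln (h 0))).
    enough (r <= real (Lub_Rbar (log_holder_ratios h d))) by lra.
    apply (le_real_Lub_Rbar _ K Hbound). exact (ex_intro _ a (ex_intro _ b (conj Ha (conj Hb (conj Hab eq_refl))))). }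
  replace (Rabs (ln (h b) - ln (h a))) with (r * hpow (Rabs (b - a)) d)
    by (unfold r; field; lra).
  apply Rmult_le_compat_r; lra.
Qed.

Lemma deriv_on_I_lower_bound F DF m : deriv_on_I F DF -> (forall x, inI x -> m <= DF x) ->
  forall a b, inI a -> inI b -> m * Rabs (b - a) <= Rabs (F b - F a).
Proof.
  intros HF Hm a b Ha Hb. destruct (MVT_on_I F DF a b HF Ha Hb) as [c [Hc ->]].
  rewrite Rabs_mult. apply Rmult_le_compat_r; [apply Rabs_pos|].
  eapply Rle_trans; [apply Hm, Hc | apply RRle_abs].
Qed.

Lemma deriv_on_I_lipschitz F DF : deriv_on_I F DF -> cont_on_I DF ->
  exists M, lipschitz_with F M.
Proof.
  intros HF HDF. destruct (cont_on_I_bounded DF HDF) as [M HM].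
  exists M. intros a b Ha Hb. destruct (MVT_on_I F DF a b HF Ha Hb) as [c [Hc ->]].
  rewrite Rabs_mult. apply Rmult_le_compat_r; [apply Rabs_pos | apply HM, Hc].
Qed.

Section Diff1.

Variables f df : R -> R.
Hypothesis Hf : Diff1 f df.

Lemma Diff1_le a b : inI a -> inI b -> a <= b -> f a <= f b.
Proof.
  intros Ha Hb Hab. destruct Hf as [_ [_ [Hdf [_ Hpos]]]].
  destruct (MVT_on_I f df a b Hdf Ha Hb) as [c [Hc Hmvt]].
  specialize (Hpos c Hc). nra.
Qed.

Lemma Diff1_inI x : inI x -> inI (f x).
Proof.
  intros Hx. destruct Hf as [f0 [f1 _]].
  assert (I0 : inI 0) by (red; lra). assert (I1 : inI 1) by (red; lra).
  pose proof (Diff1_le 0 x I0 Hx ltac:(red in Hx; lra)).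
  pose proof (Diff1_le x 1 Hx I1 ltac:(red in Hx; lra)).
  red; lra.
Qed.

Lemma Diff1_inj x y : inI x -> inI y -> x <> y -> f x <> f y.
Proof.
  intros Hx Hy Hxy E. destruct Hf as [_ [_ [Hdf [_ Hpos]]]].
  destruct (MVT_on_I f df x y Hdf Hx Hy) as [c [Hc Hmvt]].
  rewrite E, Rminus_diag in Hmvt. specialize (Hpos c Hc).
  symmetry in Hmvt. apply Rmult_integral in Hmvt as [|]; lra.
Qed.

Lemma Diff1_onto t : inI t -> exists x, inI x /\ f x = t.
Proof.
  intros Ht. destruct Hf as [f0 [f1 [Hdf _]]].
  assert (I0 : inI 0) by (red; lra). assert (I1 : inI 1) by (red; lra).
  destruct (IVT_gen (fun y => f (clamp y)) 0 1 t) as [x [Hx Hfx]].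
  - apply cont_on_I_clamp, (deriv_on_I_cont f df Hdf).
  - rewrite (clamp_id 0 I0), (clamp_id 1 I1), f0, f1.
    unfold Rmin, Rmax, inI in *. destruct Rle_dec; lra.
  - assert (HxI : inI x) by (unfold Rmin, Rmax, inI in *; destruct Rle_dec; lra).
    exists x. now rewrite (clamp_id x HxI) in Hfx.
Qed.

Lemma Diff1_ln_deriv_comp g dg dgf : Diff1 g dg -> deriv_on_I (fun x => g (f x)) dgf ->
  forall x, inI x -> ln (dgf x) = ln (dg (f x)) + ln (df x).
Proof.
  intros Hg Hgf x Hx.
  destruct Hf as [_ [_ [Hdf [_ Hdfpos]]]]. destruct Hg as [_ [_ [Hdg [_ Hdgpos]]]].
  rewrite (deriv_on_I_unique _ _ _ Hgf
             (deriv_on_I_comp f df g dg Hdf Hdg Diff1_inI Diff1_inj) x Hx).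
  apply ln_mult; [apply Hdgpos, Diff1_inI | apply Hdfpos]; auto.
Qed.

End Diff1.

Lemma log_deriv_lipschitz g dg d2g : Diff1 g dg -> deriv_on_I dg d2g -> cont_on_I d2g ->
  exists L, lipschitz_with (fun x => ln (dg x)) L.
Proof.
  intros [_ [_ [_ [Hcdg Hdgpos]]]] Hd2g Hcd2g.
  destruct (cont_on_I_pos_lower_bound dg Hcdg Hdgpos) as [c [Hc Hcdg_low]].
  destruct (deriv_on_I_lipschitz dg d2g Hd2g Hcd2g) as [M HM].
  exists (M / c). intros a b Ha Hb.
  replace (M / c * Rabs (b - a)) with (M * Rabs (b - a) / c) by (field; lra).
  apply ln_diff_le; auto.
Qed.

Lemma log_deriv_holder f df d m : Diff1delta f df d -> 0 < m ->
  (forall x, inI x -> m <= df x) -> exists K, holder_with (fun x => ln (df x)) K d.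
Proof.
  intros [_ [K HK]] Hm Hlow.
  exists (K / m). intros a b Ha Hb.
  replace (K / m * hpow (Rabs (b - a)) d) with (K * hpow (Rabs (b - a)) d / m) by (field; lra).
  apply ln_diff_le; auto.
Qed.

Lemma holder_with_pullback psi f K d m : 0 < m -> 0 <= d -> 0 <= K ->
  (forall a b, inI a -> inI b -> m * Rabs (b - a) <= Rabs (f b - f a)) ->
  holder_with (fun x => psi (f x)) K d ->
  forall a b, inI a -> inI b ->
    Rabs (psi (f b) - psi (f a)) <= K / Rpower m d * hpow (Rabs (f b - f a)) d.
Proof.
  intros Hm Hd HK Hlow Hpsi a b Ha Hb.
  assert (Hmd : 0 < Rpower m d) by apply exp_pos.
  eapply Rle_trans; [apply Hpsi; auto|].
  replace (K / Rpower m d * hpow (Rabs (f b - f a)) d)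
    with (K * (hpow (Rabs (f b - f a)) d / Rpower m d)) by (field; lra).
  apply Rmult_le_compat_l; auto.
  apply Rmult_le_reg_r with (Rpower m d); auto.
  unfold Rdiv. rewrite Rmult_assoc, Rinv_l, Rmult_1_r, Rmult_comm by lra.
  apply hpow_scale_le; auto. apply Rabs_pos.
Qed.

Theorem mainTheorem13 :
  forall (d C m : R) (f df g dg d2g d3g dgf : R -> R),
    0 < d < 1/2 ->
    Diff03 g dg d2g d3g ->
    Diff1delta f df d ->
    deriv_on_I (fun x => g (f x)) dgf ->
    0 < C ->
    p_delta dgf d <= C ->
    (exists x0, inI x0 /\ df x0 = m) ->
    (forall x, inI x -> m <= df x) ->
    forall s t, inI s -> inI t ->
      Rabs (ln (dg t) - ln (dg s)) <=
        (C + p_delta df d) / Rpower m d * hpow (Rabs (t - s)) d.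
Proof.
  intros d C m f df g dg d2g d3g dgf Hd Hg Hf Hgf HC Hp [x0 [Hx0 Hm0]] Hm s t Hs Ht.
  destruct Hg as [Hg [Hd2g [Hd3g _]]].
  assert (Hmpos : 0 < m) by (destruct Hf as [[_ [_ [_ [_ Hpos]]]] _]; rewrite <- Hm0; auto).
  pose proof Hf as [Hf1 _].
  pose proof (Diff1_ln_deriv_comp f df Hf1 g dg dgf Hg Hgf) as Hsplit.
  destruct (log_deriv_holder f df d m Hf Hmpos Hm) as [Kf HKf].
  destruct (log_deriv_lipschitz g dg d2g Hg Hd2g (deriv_on_I_cont _ _ Hd3g)) as [Lg HLg].
  pose proof Hf1 as [_ [_ [Hdf [Hcdf _]]]].
  destruct (deriv_on_I_lipschitz f df Hdf Hcdf) as [Mf HMf].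
  assert (Hgf_holder : holder_with (fun x => ln (dgf x)) (Lg * Mf + Kf) d).
  { apply (holder_with_ext _ (fun x => ln (dg (f x)) + ln (df x))); auto.
    apply holder_with_add; [|exact HKf].
    apply lipschitz_with_holder; [lra|].
    apply (lipschitz_with_comp (fun u => ln (dg u))); auto. apply (Diff1_inI f df Hf1). }
  assert (Hpsi : holder_with (fun x => ln (dg (f x))) (C + p_delta df d) d).
  { apply (holder_with_ext _ (fun x => ln (dgf x) - ln (df x))).
    { intros x Hx. rewrite Hsplit by auto. ring. }
    apply holder_with_sub.
    - eapply holder_with_le; [exact Hp | eapply holder_with_p_delta; eauto].
    - eapply holder_with_p_delta; eauto. }
  destruct (Diff1_onto f df Hf1 s Hs) as [x [Hx <-]].
  destruct (Diff1_onto f df Hf1 t Ht) as [y [Hy <-]].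
  apply (holder_with_pullback (fun u => ln (dg u)) f _ d m); auto; try lra.
  - pose proof (p_delta_nonneg df d). lra.
  - apply (deriv_on_I_lower_bound f df m Hdf Hm).
Qed.
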